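(* Let $k$ be odd and let $G$ be a $k$-uniform $s$-cycle with $1\le s<\frac{k}{2}$. Then $\lambda(\mathcal{L})=\Delta=2$, where $\Delta$ is the maximum degree of $G$. If $s$ is even, then the only Laplacian H-eigenvalue $\lambda$ of $G$ with $\lambda>1$ is $2$.
   Context: A $k$-uniform $s$-cycle with $m$ edges has vertex set $\mathbb{Z}_n$, $n=m(k-s)$ (vertex $n+i$ identified with $i$), and edges $e_j=\{j(k-s)+1,\ldots,j(k-s)+k\}$, $j=0,\ldots,m-1$; it is assumed that $n\ge 2k-s$. The degree $d_i$ of a vertex is the number of edges containing it. A Laplacian H-eigenvalue of $G$ is a real $\lambda$ for which there exists $\mathbf{x}\in\mathbb{R}^n\setminus\{0\}$ with $\lambda x_i^{k-1}=d_ix_i^{k-1}-\sum_{e\ni i}\prod_{j\in e\setminus\{i\}}x_j$ for all $i$ (equivalently, an H-eigenvalue of the Laplacian tensor $\mathcal{L}=\mathcal{D}-\mathcal{A}$, with $\mathcal{A}$ the adjacency tensor having entries $1/(k-1)!$ on edges and $\mathcal{D}$ the diagonal degree tensor); $\lambda(\mathcal{L})$ is the largest Laplacian H-eigenvalue. *)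

From HB Require Import structures.
From mathcomp Require Import all_boot all_order all_algebra.
From mathcomp Require Import reals.
Unset Printing Implicit Defensive.
Import Order.TTheory GRing.Theory Num.Theory.
Local Open Scope ring_scope.

(* The k-uniform s-cycle with m edges: vertex set Z_n, n = m(k-s), realised as
   'I_n (vertex t is represented by t %% n, so vertex n+i = i). *)
Definition scyc_n (k s m : nat) : nat := (m * (k - s))%N.

Definition scyc_edge (k s m : nat) (j : 'I_m) : {set 'I_(scyc_n k s m)} :=
  [set v : 'I_(scyc_n k s m) |
     [exists t : 'I_k, val v == ((j * (k - s) + t.+1) %% scyc_n k s m)%N]].

Definition scyc_deg (k s m : nat) (i : 'I_(scyc_n k s m)) : nat :=
  #|[set j : 'I_m | i \in scyc_edge k s m j]|.

Definition scyc_maxdeg (k s m : nat) : nat :=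
  (\max_(i : 'I_(scyc_n k s m)) scyc_deg k s m i)%N.

Definition is_lap_H_eigenvalue (R : realType) (k s m : nat) (lambda : R) : Prop :=
  exists x : 'I_(scyc_n k s m) -> R,
    (exists i, x i != 0) /\
    forall i : 'I_(scyc_n k s m),
      lambda * x i ^+ (k - 1) =
        (scyc_deg k s m i)%:R * x i ^+ (k - 1)
        - \sum_(j : 'I_m | i \in scyc_edge k s m j)
            \prod_(v in scyc_edge k s m j :\ i) x v.

From mathcomp Require Import all_boot all_order all_algebra.
From mathcomp Require Import reals.
From mathcomp Require Import lra ring zify.
Set Implicit Arguments.
Unset Strict Implicit.
Unset Printing Implicit Defensive.
Import Order.TTheory GRing.Theory Num.Theory.

Local Open Scope ring_scope.

(* Write the vertices of the s-cycle as offsets r < p = k - s in consecutive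
   blocks, edge q being block q followed by the first s vertices of block
   q + 1, and let P_q be the product of x over edge q.  The eigenvalue
   equations read (lam - 1) x_v^k = - P_q at the p - s vertices lying in edge q
   only, and (lam - 2) x_v^k = - (P_(q-1) + P_q) at the s vertices shared by
   edges q - 1 and q.  Multiplying them over edge q, where k - 2s is odd, gives
     K P_q^(2s) = - ((P_(q-1) + P_q) (P_q + P_(q+1)))^s,
   K = (lam - 2)^(2s) (lam - 1)^(k-2s) > 0 for 1 < lam != 2.  For even s this
   forces P = 0.  For odd s, next to a negative sum P_(q-1) + P_q the sums
   alternate in sign and grow in absolute value, which is impossible at a
   maximum of |P_(q-1) + P_q| around the cycle; hence all sums vanish, then
   P = 0, and then x = 0.  The eigenvalue 2 is attained by the indicator
   vector of a vertex of degree 2. *)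

Lemma odd_power_identity_cancel (R : idomainType) (K a A B : R) (e s : nat) :
  odd e -> a != 0 ->
  a ^+ (e + (s + s)) * K = (- A) ^+ s * (- a) ^+ e * (- B) ^+ s ->
  K * a ^+ (s + s) = - (A * B) ^+ s.
Proof.
move=> e_odd a_neq0 identity.
have exprN_odd : (- a) ^+ e = - a ^+ e.
  by rewrite exprNn -signr_odd e_odd expr1 mulN1r.
rewrite exprN_odd exprD in identity.
apply: (mulfI (expf_neq0 e a_neq0)).
transitivity (a ^+ e * a ^+ (s + s) * K); first by ring.
by rewrite identity -(mulrNN A B) exprMn; ring.
Qed.

Lemma periodic_modn (T : Type) (f : nat -> T) (m : nat) :
  (forall j, f (j + m)%N = f j) -> forall j, f (j %% m)%N = f j.
Proof.
move=> per j; rewrite [in RHS](divn_eq j m).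
elim: (j %/ m)%N => [|q IH]; first by rewrite mul0n add0n.
by rewrite mulSn -addnA addnC per.
Qed.

Lemma prodr_nat_scale (R : comPzRingType) a b (F : nat -> R) (c d : R) :
  (forall t, (a <= t < b)%N -> c * F t = d) ->
  (\prod_(a <= t < b) F t) * c ^+ (b - a) = d ^+ (b - a).
Proof.
move=> scaled; rewrite -!prodr_const_nat -big_split /=.
by apply: eq_big_nat => t t_in; rewrite mulrC scaled.
Qed.

Lemma periodic_argmax (R : realDomainType) (f : nat -> R) (m : nat) :
  (0 < m)%N -> (forall j, f (j + m)%N = f j) -> exists i, forall j, f j <= f i.
Proof.
move=> m_gt0 per; exists [arg max_(i > Ordinal m_gt0) f i]%O => j.
rewrite -(periodic_modn per); case: arg_maxP => //= i _ Hi.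
exact: (Hi (Ordinal (ltn_pmod j m_gt0))).
Qed.

Section EdgeProductRecurrence.
Variables (R : realFieldType) (K : R) (s : nat).
Hypotheses (K_gt0 : 0 < K) (s_gt0 : (0 < s)%N).

(* [x] is the product of a hyperedge, [w] and [y] those of its two neighbours. *)
Definition edge_product_rel (w x y : R) : Prop :=
  x != 0 -> K * x ^+ (s + s) = - ((w + x) * (x + y)) ^+ s.

Lemma edge_product_relC w x y : edge_product_rel w x y -> edge_product_rel y x w.
Proof. by move=> h /h ->; congr (- _ ^+ _); ring. Qed.

Lemma edge_product_relN w x y :
  edge_product_rel w x y -> edge_product_rel (- w) (- x) (- y).
Proof.
move=> h; rewrite /edge_product_rel oppr_eq0 => /h {h}.
have -> : (- x) ^+ (s + s) = x ^+ (s + s).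
  by rewrite exprD -exprMn mulrNN exprMn -exprD.
by rewrite -!opprD mulrNN.
Qed.

Lemma edge_product_rel_lhs_gt0 x : x != 0 -> 0 < K * x ^+ (s + s).
Proof.
by move=> x0; rewrite mulr_gt0 // exprn_even_gt0 ?oddD ?addbb // x0 orbT.
Qed.

Lemma edge_product_rel_even w x y : ~~ odd s -> edge_product_rel w x y -> x = 0.
Proof.
move=> s_even h; apply/eqP/negP => /negP x0.
have := edge_product_rel_lhs_gt0 x0; rewrite (h x0) oppr_gt0 ltNge.
by rewrite exprn_even_ge0.
Qed.

Lemma edge_product_rel_sum0 w x y : edge_product_rel w x y -> w + x = 0 -> x = 0.
Proof.
move=> h wx0; apply/eqP/negP => /negP x0.
have := edge_product_rel_lhs_gt0 x0.
by rewrite (h x0) wx0 mul0r expr0n gtn_eqF // oppr0 ltxx.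
Qed.

Lemma edge_product_rel_lt0 w x y : odd s ->
  edge_product_rel w x y -> x != 0 -> (w + x) * (x + y) < 0.
Proof.
move=> s_odd h x0; have := edge_product_rel_lhs_gt0 x0; rewrite (h x0) oppr_gt0.
apply: contraLR; rewrite -!leNgt => ge0.
by rewrite exprn_ge0.
Qed.

Lemma edge_product_rel_norm w x y : edge_product_rel w x y -> x != 0 ->
  K * `|x| ^+ (s + s) = `|w + x| ^+ s * `|x + y| ^+ s.
Proof.
move=> h /h /(congr1 Num.norm).
by rewrite normrN normrM gtr0_norm // !normrX normrM exprMn.
Qed.

Lemma edge_product_rel_grow w x y z : odd s ->
  edge_product_rel w x y -> edge_product_rel x y z ->
  w + x < 0 -> x < 0 -> `|w + x| < `|y + z|.
Proof.
move=> s_odd hx hy wx_lt0 x_lt0.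
have x0 : x != 0 by rewrite lt_eqF.
have xy_gt0 : 0 < x + y.
  by rewrite -(nmulr_rlt0 _ wx_lt0) edge_product_rel_lt0.
have y0 : y != 0 by rewrite gt_eqF //; lra.
have x_lt_y : `|x| < `|y| by rewrite ltr0_norm // gtr0_norm; lra.
have := edge_product_rel_norm hx x0; have := edge_product_rel_norm hy y0.
move=> ey ex.
have xy_pow_gt0 : 0 < `|x + y| ^+ s by rewrite exprn_gt0 // normr_gt0 gt_eqF.
rewrite -(ltr_pXn2r s_gt0) ?nnegrE // -(ltr_pM2r xy_pow_gt0) [X in _ < X]mulrC.
by rewrite -ex -ey ltr_pM2l // ltrXn2r // -lt0n addn_gt0 s_gt0.
Qed.

Lemma edge_product_max_sum_ge0 (P : nat -> R) i : odd s ->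
  (forall j, edge_product_rel (P j) (P j.+1) (P j.+2)) ->
  (forall j, `|P j + P j.+1| <= `|P i.+2 + P i.+3|) -> 0 <= P i.+2 + P i.+3.
Proof.
move=> s_odd P_rel Pmax; rewrite leNgt; apply/negP => S_lt0.
have [P3_lt0 | P3_ge0] := ltP (P i.+3) 0.
  have := edge_product_rel_grow s_odd (P_rel i.+2) (P_rel i.+3) S_lt0 P3_lt0.
  by have := Pmax i.+4; lra.
have := edge_product_rel_grow s_odd
  (edge_product_relC (P_rel i.+1)) (edge_product_relC (P_rel i)).
rewrite addrC [P i.+1 + _]addrC => /(_ S_lt0 ltac:(lra)).
by have := Pmax i; lra.
Qed.

Lemma periodic_edge_products_eq0 (P : nat -> R) m :
  (0 < m)%N -> (forall j, P (j + m)%N = P j) ->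
  (forall j, edge_product_rel (P j) (P j.+1) (P j.+2)) -> forall j, P j = 0.
Proof.
move=> m_gt0 per P_rel.
suff P_succ0 : forall j, P j.+1 = 0.
  case=> [|j]; last exact: P_succ0.
  by rewrite -(per 0%N) add0n -(prednK m_gt0) P_succ0.
case: (boolP (odd s)) => s_odd j; last exact: edge_product_rel_even (P_rel j).
pose S j := P j + P j.+1.
have perS l : `|S (l + m)%N| = `|S l| by rewrite /S per -addSn per.
have [i0 Smax] := periodic_argmax m_gt0 perS.
pose i := (i0 + m + m - 2)%N.
have Si : S i.+2 = S i0.
  rewrite /S -(per i0) -(per (i0 + m)%N) -(per i0.+1) -(per (i0.+1 + m)%N).
  by congr (P _ + P _); rewrite /i; lia.
have {}Smax l : `|P l + P l.+1| <= `|P i.+2 + P i.+3|.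
  by move: (Smax l); rewrite -Si.
have Si0 : P i.+2 + P i.+3 = 0.
  apply/eqP; rewrite eq_le edge_product_max_sum_ge0 // andbT -oppr_ge0 opprD.
  apply: (@edge_product_max_sum_ge0 (fun j => - P j)) => // [l|l].
    exact: edge_product_relN.
  by rewrite -!opprD !normrN.
apply: (edge_product_rel_sum0 (P_rel j)); apply/eqP; rewrite -normr_le0.
by have := Smax j; rewrite Si0 normr0.
Qed.

End EdgeProductRecurrence.

Section SCycle.
Variables k s m : nat.
Hypotheses (s_gt0 : (0 < s)%N) (s2_lt_k : (s.*2 < k)%N)
  (n_ge : (2 * k - s <= scyc_n k s m)%N).

Local Notation n := (scyc_n k s m).
Local Notation p := (k - s)%N.
Local Notation edge := (scyc_edge k s m).

Lemma s_lt_p : (s < p)%N.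
Proof. by move: s2_lt_k; rewrite -addnn; lia. Qed.

Lemma m_gt1 : (1 < m)%N.
Proof. by move: n_ge s2_lt_k; rewrite /scyc_n -addnn; nia. Qed.

Lemma m_gt0 : (0 < m)%N.
Proof. exact: ltnW m_gt1. Qed.

Lemma k_lt_n : (k < n)%N.
Proof. by move: n_ge s2_lt_k; rewrite /scyc_n -addnn; nia. Qed.

Lemma p_gt0 : (0 < p)%N.
Proof. exact: leq_ltn_trans s_lt_p. Qed.

Lemma n_gt0 : (0 < n)%N.
Proof. exact: leq_ltn_trans k_lt_n. Qed.

(* Offset [r] in block [q]; the [+ 1] matches the numbering in [scyc_edge]. *)
Definition vtx (q r : nat) : 'I_n := Ordinal (ltn_pmod (q * p + r + 1) n_gt0).

Definition eid (j : nat) : 'I_m := Ordinal (ltn_pmod j m_gt0).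

Lemma modn_block q a : (q * p + a = (q %% m) * p + a %[mod n])%N.
Proof. by rewrite {1}(divn_eq q m) mulnDl -mulnA -addnA modnMDl. Qed.

Lemma vtx_congr q q' r : (q = q' %[mod m])%N -> vtx q r = vtx q' r.
Proof.
move=> eq_q; apply: val_inj => /=.
by rewrite -!addnA modn_block (modn_block q') eq_q.
Qed.

Lemma vtx_shift q t : vtx q (p + t) = vtx q.+1 t.
Proof.
apply: val_inj => /=.
by have -> : (q * p + (p + t) = q.+1 * p + t)%N by rewrite mulSn; lia.
Qed.

Lemma vtx_inj q q' r r' : (r < p)%N -> (r' < p)%N ->
  vtx q r = vtx q' r' -> (q = q' %[mod m])%N /\ r = r'.
Proof.
move=> r_lt r'_lt /(congr1 val) /= /eqP; have p_gt0 := p_gt0.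
rewrite eqn_modDr modn_block (modn_block q').
have lt_n a b : (b < p)%N -> (a %% m * p + b < n)%N.
  by have := ltn_pmod a m_gt0; rewrite /scyc_n; nia.
rewrite (modn_small (lt_n q r r_lt)) (modn_small (lt_n q' r' r'_lt)) => /eqP e.
split; last by have := congr1 (modn^~ p) e; rewrite /= !modnMDl !modn_small.
by have := congr1 (divn^~ p) e; rewrite /= !divnMDl // !divn_small // !addn0.
Qed.

Lemma vtx_surj v : exists q r, (r < p)%N /\ v = vtx q.+1 r.
Proof.
exists ((v + n - 1) %/ p + m.-1)%N, ((v + n - 1) %% p)%N; split.
  by rewrite ltn_mod p_gt0.
rewrite -addnS prednK ?m_gt0 //.
rewrite -(@vtx_congr ((v + n - 1) %/ p)); last by rewrite modnDr.
apply: val_inj; rewrite /= -divn_eq subnK; last by have := n_gt0; lia.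
by rewrite modnDr modn_small.
Qed.

Lemma eid_val (j : 'I_m) : eid j = j.
Proof. by apply: val_inj; rewrite /= modn_small. Qed.

Lemma eid_eq (j : 'I_m) a : (j == eid a) = (j == a %[mod m])%N.
Proof. by rewrite -(inj_eq val_inj) /= [in RHS]modn_small. Qed.

Lemma edge_eid j : edge (eid j) = [set vtx j t | t : 'I_k].
Proof.
apply/setP => v; rewrite inE; apply/existsP/imsetP => [[t /eqP v_eq]|[t _ ->]].
  exists t => //; apply: val_inj; rewrite v_eq /= -addn1 -addnA.
  by rewrite -modn_block addnA.
by exists t; apply/eqP; rewrite /= -addnA addn1 modn_block.
Qed.

Lemma vtx_inj_offset j : injective (fun t : 'I_k => vtx j t).
Proof.
move=> t1 t2 /(congr1 val) /= /eqP.
have t1_lt := ltn_ord t1; have t2_lt := ltn_ord t2; have k_lt := k_lt_n.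
rewrite -!addnA eqn_modDl !modn_small; [|lia|lia].
by move=> /eqP t_eq; apply: ord_inj; lia.
Qed.

Lemma card_edge j : #|edge j| = k.
Proof.
by rewrite -[j]eid_val edge_eid card_imset ?card_ord //; apply: vtx_inj_offset.
Qed.

Lemma eid_succ_neq q : eid q.+1 != eid q.
Proof.
rewrite eid_eq /= modn_mod -addn1 -[X in (_ == X %[mod m])%N]addn0 eqn_modDl.
by rewrite mod0n modn_small ?m_gt1.
Qed.

Lemma mem_edge_vtx q r (j : 'I_m) : (r < p)%N ->
  (vtx q.+1 r \in edge j) = (j == eid q.+1) || (r < s)%N && (j == eid q).
Proof.
move=> r_lt; rewrite -[j]eid_val edge_eid !eid_eq /= modn_mod.
case: j => j j_lt /=.
have s_lt := s_lt_p.
apply/imsetP/idP => [[t _ /esym] | /orP[jq | /andP[r_lt_s jq]]].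
- have [t_lt | t_ge] := ltnP t p.
    by case/vtx_inj => // ->; rewrite eqxx.
  have t_lt := ltn_ord t.
  rewrite -(subnKC t_ge) vtx_shift => /vtx_inj[]; [lia | done | ].
  move=> /eqP jq <-; apply/orP; right; apply/andP; split.
    by lia.
  by rewrite -(eqn_modDr 1) !addn1 jq.
- have r_lt_k : (r < k)%N by lia.
  by exists (Ordinal r_lt_k) => //; apply: vtx_congr; apply/esym/eqP.
- have r_lt_k : (p + r < k)%N by lia.
  exists (Ordinal r_lt_k : 'I_k) => //=; rewrite vtx_shift; apply: vtx_congr.
  by apply/eqP; rewrite -[q.+1]addn1 -[j.+1]addn1 eqn_modDr eq_sym.
Qed.

Lemma sum_edges_vtx (V : nmodType) (F : 'I_m -> V) q r : (r < p)%N ->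
  \sum_(j | vtx q.+1 r \in edge j) F j =
  F (eid q.+1) + (if (r < s)%N then F (eid q) else 0).
Proof.
move=> r_lt; rewrite (bigD1 (eid q.+1)) /=; last by rewrite mem_edge_vtx ?eqxx.
congr (_ + _); case: ifP => r_lt_s.
  apply: big_pred1 => j; rewrite mem_edge_vtx // r_lt_s /=.
  case: (eqVneq j (eid q.+1)) => [->|_]; last by rewrite andbT.
  by rewrite (negbTE (eid_succ_neq q)).
by apply: big_pred0 => j; rewrite mem_edge_vtx // r_lt_s orbF andbN.
Qed.

Lemma scyc_deg_vtx q r : (r < p)%N ->
  scyc_deg k s m (vtx q.+1 r) = (if (r < s)%N then 2 else 1)%N.
Proof.
move=> r_lt; rewrite /scyc_deg cardsE -sum1_card.
rewrite (sum_edges_vtx (fun _ => 1%N)) //.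
by case: ifP.
Qed.

Definition lap_eigen_eqs (R : pzRingType) (lam : R) (x : 'I_n -> R) : Prop :=
  forall i, lam * x i ^+ (k - 1) =
    (scyc_deg k s m i)%:R * x i ^+ (k - 1)
    - \sum_(j : 'I_m | i \in edge j) \prod_(v in edge j :\ i) x v.

Section EigenEquations.
Variables (R : comNzRingType) (lam : R) (x : 'I_n -> R).
Hypothesis eig : lap_eigen_eqs lam x.

Definition edge_prod (j : nat) : R := \prod_(v in edge (eid j)) x v.

Lemma exprk_pred (y : R) : y ^+ k = y * y ^+ (k - 1).
Proof. by rewrite -exprS; congr (_ ^+ _); have := k_lt_n; lia. Qed.

Lemma eig_vtx_single q r : (s <= r < p)%N ->
  (lam - 1) * x (vtx q.+1 r) ^+ k = - edge_prod q.+1.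
Proof.
case/andP=> s_le_r r_lt; have := eig (vtx q.+1 r).
rewrite sum_edges_vtx // scyc_deg_vtx // ltnNge s_le_r /= addr0.
rewrite /edge_prod (big_setD1 _ (_ : vtx q.+1 r \in edge (eid q.+1))); last first.
  by rewrite mem_edge_vtx ?eqxx.
rewrite exprk_pred /=; set y := x _; set Y := y ^+ _ => eqv.
by transitivity (y * (lam * Y) - y * Y); [ring | rewrite eqv; ring].
Qed.

Lemma eig_vtx_shared q r : (r < s)%N ->
  (lam - 2) * x (vtx q.+1 r) ^+ k = - (edge_prod q + edge_prod q.+1).
Proof.
move=> r_lt_s; have r_lt : (r < p)%N by have := s_lt_p; lia.
have := eig (vtx q.+1 r); rewrite sum_edges_vtx // scyc_deg_vtx // r_lt_s.
rewrite /edge_prod (big_setD1 _ (_ : vtx q.+1 r \in edge (eid q))); last first.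
  by rewrite mem_edge_vtx // r_lt_s eqxx orbT.
rewrite (big_setD1 _ (_ : vtx q.+1 r \in edge (eid q.+1))); last first.
  by rewrite mem_edge_vtx ?eqxx.
rewrite exprk_pred /=; set y := x _; set Y := y ^+ _ => eqv.
by transitivity (y * (lam * Y) - 2%:R * y * Y); [ring | rewrite eqv; ring].
Qed.

Lemma edge_prodE j : edge_prod j = \prod_(0 <= t < k) x (vtx j t).
Proof.
rewrite /edge_prod edge_eid big_imset /=; last first.
  by move=> t1 t2 _ _; apply: vtx_inj_offset.
by rewrite big_mkord; apply: eq_bigl.
Qed.

Lemma edge_prod_periodic j : edge_prod (j + m) = edge_prod j.
Proof.
rewrite /edge_prod (_ : eid (j + m) = eid j) //.
by apply: val_inj; rewrite /= modnDr.
Qed.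

Lemma edge_prod_identity j :
  edge_prod j.+1 ^+ (p - s + (s + s))
  * ((lam - 2) ^+ (s + s) * (lam - 1) ^+ (p - s)) =
  (- (edge_prod j + edge_prod j.+1)) ^+ s * (- edge_prod j.+1) ^+ (p - s)
  * (- (edge_prod j.+1 + edge_prod j.+2)) ^+ s.
Proof.
have s_lt := s_lt_p; have k_eq : (p - s + (s + s) = k)%N by lia.
rewrite k_eq {1}edge_prodE -prodrXl (@big_cat_nat _ _ _ s 0 k) //; last by lia.
rewrite (@big_cat_nat _ _ _ p s k) /=; [ | lia | lia].
set F := fun t => x (vtx j.+1 t) ^+ k.
have shared_prev :=
  @prodr_nat_scale _ 0 s F (lam - 2) (- (edge_prod j + edge_prod j.+1)).
have single := @prodr_nat_scale _ s p F (lam - 1) (- edge_prod j.+1).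
have shared_next :=
  @prodr_nat_scale _ p k F (lam - 2) (- (edge_prod j.+1 + edge_prod j.+2)).
rewrite subn0 in shared_prev.
rewrite (_ : k - p = s)%N in shared_next; last by lia.
rewrite -shared_prev => [|t /andP[_ t_lt]]; last exact: eig_vtx_shared.
rewrite -single => [|t t_in]; last exact: eig_vtx_single.
rewrite -shared_next => [|t /andP[t_ge t_lt]]; last first.
  by rewrite /F -(subnKC t_ge) vtx_shift eig_vtx_shared //; lia.
rewrite exprD; ring.
Qed.

End EigenEquations.

Lemma lap_eigenvector_eq0 (R : realFieldType) (lam : R) (x : 'I_n -> R) :
  odd k -> lap_eigen_eqs lam x -> 1 < lam -> lam != 2 -> forall v, x v = 0.
Proof.
move=> k_odd eig lam_gt1 lam_neq2; have s_lt := s_lt_p.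
pose K := (lam - 2) ^+ (s + s) * (lam - 1) ^+ (p - s).
have K_gt0 : 0 < K.
  apply: mulr_gt0; last by rewrite exprn_gt0 // subr_gt0.
  by rewrite exprn_even_gt0 ?oddD ?addbb // subr_eq0 lam_neq2 orbT.
have ps_odd : odd (p - s).
  have k_eq : (p - s + (s + s) = k)%N by lia.
  by move: k_odd; rewrite -{1}k_eq oddD addnn odd_double addbF.
have prod0 : forall j, edge_prod x j = 0.
  apply: (periodic_edge_products_eq0 K_gt0 s_gt0 m_gt0 (edge_prod_periodic x)).
  move=> j nz; apply: (odd_power_identity_cancel ps_odd nz).
  exact: edge_prod_identity eig j.
move=> v; have [q [r [r_lt ->]]] := vtx_surj v.
have [r_lt_s | r_ge_s] := ltnP r s.
  have := eig_vtx_shared eig q r_lt_s; rewrite !prod0 addr0 oppr0 => /eqP.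
  by rewrite mulf_eq0 subr_eq0 (negbTE lam_neq2) expf_eq0 => /andP[_ /eqP].
have := eig_vtx_single eig q (r := r).
rewrite r_ge_s r_lt prod0 oppr0 => /(_ isT) /eqP.
by rewrite mulf_eq0 subr_eq0 gt_eqF // expf_eq0 => /andP[_ /eqP].
Qed.

Lemma lap_H_eigenvalue_gt1 (R : realType) (lam : R) : odd k ->
  is_lap_H_eigenvalue R k s m lam -> 1 < lam -> lam = 2.
Proof.
move=> k_odd [x [[v xv_neq0] eig]] lam_gt1; apply/eqP/negPn/negP => lam_neq2.
by rewrite (lap_eigenvector_eq0 k_odd eig lam_gt1 lam_neq2) eqxx in xv_neq0.
Qed.

Lemma scyc_maxdeg2 : scyc_maxdeg k s m = 2%N.
Proof.
have s_lt := s_lt_p; apply/eqP; rewrite eqn_leq; apply/andP; split.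
  apply/bigmax_leqP => v _; have [q [r [r_lt ->]]] := vtx_surj v.
  by rewrite scyc_deg_vtx //; case: ifP.
have := @leq_bigmax _ (scyc_deg k s m) (vtx 1 0).
by rewrite scyc_deg_vtx ?s_gt0 //; lia.
Qed.

(* A product over an edge minus one vertex has [k - 1 >= 2] factors, so it
   vanishes on an indicator vector. *)
Lemma is_lap_H_eigenvalue2 (R : realType) : is_lap_H_eigenvalue R k s m 2.
Proof.
pose v0 := vtx 1 0; pose x (v : 'I_n) : R := (v == v0)%:R.
have k_gt2 : (2 < k)%N by move: s2_lt_k; rewrite -addnn; lia.
have prod0 (j : 'I_m) i : \prod_(v in edge j :\ i) x v = 0.
  have : (0 < #|edge j :\ i :\ v0|)%N.
    have card_D1 (A : {set 'I_n}) a : (#|A| <= #|A :\ a|.+1)%N.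
      by rewrite (cardsD1 a A) -add1n leq_add2r leq_b1.
    have := card_D1 (edge j :\ i) v0; have := card_D1 (edge j) i.
    rewrite card_edge => k_le k_le'.
    by rewrite -2!ltnS (leq_trans k_gt2) // (leq_trans k_le) ?ltnS.
  case/card_gt0P => v; rewrite in_setD1 => /andP[v_neq v_in].
  by rewrite (big_setD1 v) //= /x (negbTE v_neq) mul0r.
exists x; split; first by exists v0; rewrite /x eqxx oner_neq0.
move=> i; rewrite big1 ?subr0; last by move=> j _; apply: prod0.
rewrite /x; have [->|_] := eqVneq i v0.
  by rewrite /v0 scyc_deg_vtx ?s_gt0 //; have := s_lt_p; lia.
by rewrite expr0n /= (_ : (k - 1 == 0)%N = false) ?mulr0 //; lia.
Qed.

End SCycle.

Theorem proposition7p1 (R : realType) (k s m : nat) :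
  odd k -> (1 <= s)%N -> (s.*2 < k)%N -> (2 * k - s <= scyc_n k s m)%N ->
  [/\ is_lap_H_eigenvalue R k s m 2,
      (forall lambda : R, is_lap_H_eigenvalue R k s m lambda -> lambda <= 2),
      scyc_maxdeg k s m = 2%N
    & (~~ odd s ->
       forall lambda : R, is_lap_H_eigenvalue R k s m lambda -> 1 < lambda ->
         lambda = 2)].
Proof.
move=> k_odd s_gt0 s2_lt_k n_ge.
have eigenvalue_gt1 := lap_H_eigenvalue_gt1 s_gt0 s2_lt_k n_ge k_odd.
split.
- exact: is_lap_H_eigenvalue2.
- move=> lam eig; rewrite leNgt; apply/negP => lam_gt2.
  have lam_gt1 : 1 < lam by apply: lt_trans lam_gt2; rewrite ltr1n.
  by move: lam_gt2; rewrite (eigenvalue_gt1 _ _ eig lam_gt1) ltxx.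
- exact: scyc_maxdeg2.
- by move=> _; apply: eigenvalue_gt1.
Qed.
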